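(* Let $H$ be a graph. Neither a leaf nor a support vertex of $H$ belongs to a good subgraph of $H$.
   Context: Graphs are finite and may have multiple edges and loops. A leaf is a vertex of degree one; a support vertex is a vertex adjacent to a leaf. Good subgraph: Let $Q$ be a subgraph of $H$ without isolated vertices, and $E_Q^-$ the set of edges of $H$ not in $Q$ incident with at least one vertex of $Q$. $Q$ is a good subgraph of $H$ if there exist a set of edges $E$ with $E_Q^-\subseteq E\subseteq E_H\setminus E_Q$ and an orientation $A_E$ of the edges of $E$ (where $d^+(x)$, $d^-(x)$ denote the numbers of arcs of $A_E$ leaving, resp. entering $x$, and $d_H(x)$ is the degree in $H$) such that the arcs of $A_E$ form a family $\mathcal P=\{P_x: x\in V_Q\}$ of oriented paths indexed by the vertices of $Q$ with: (i) every vertex $v$ of $Q$ is the initial vertex of exactly one path of $\mathcal P$, and $d^+(v)=1$, $d^-(v)=d_H(v)-d_Q(v)-1$; (ii) if $x$ is an inner vertex of a path of $\mathcal P$, then $d^+(x)=1$ and $d^-(x)=d_H(x)-1$; (iii) if $x$ is an end vertex of a path of $\mathcal P$, then $d^-(x)<d_H(x)$. *)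

From mathcomp Require Import all_boot.
Set Implicit Arguments. Unset Strict Implicit. Unset Printing Implicit Defensive.

Section Graph.
(* A multigraph H: finite vertex type V, finite edge type E, and each edge
   e has endpoints (ends e).1, (ends e).2 (equal for a loop). *)
Variables (V E : finType) (ends : E -> V * V).

Definition incident (e : E) (x : V) : bool := ((ends e).1 == x) || ((ends e).2 == x).

(* degree in the subgraph with edge set F (loops count twice) *)
Definition degIn (F : {set E}) (x : V) : nat :=
  #|[set e in F | (ends e).1 == x]| + #|[set e in F | (ends e).2 == x]|.

Definition deg (x : V) : nat := degIn [set: E] x.

Definition leaf (x : V) : bool := deg x == 1.

Definition support_vertex (x : V) : Prop :=
  exists (e : E) (y : V), leaf y /\ y != x /\ (ends e = (x, y) \/ ends e = (y, x)).

(* A subgraph Q without isolated vertices is determined by its edge set EQ;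
   its vertex set is the set of vertices incident with an edge of EQ. *)
Definition VQ (EQ : {set E}) : {set V} := [set v | [exists e in EQ, incident e v]].

Definition EQminus (EQ : {set E}) : {set E} :=
  [set e | (e \notin EQ) && [exists v in VQ EQ, incident e v]].

(* orientation: dir e = true means arc (ends e).1 -> (ends e).2 *)
Definition tail (dir : E -> bool) (e : E) : V := if dir e then (ends e).1 else (ends e).2.
Definition head (dir : E -> bool) (e : E) : V := if dir e then (ends e).2 else (ends e).1.

Definition outdeg (A : {set E}) (dir : E -> bool) (x : V) : nat :=
  #|[set e in A | tail dir e == x]|.
Definition indeg (A : {set E}) (dir : E -> bool) (x : V) : nat :=
  #|[set e in A | head dir e == x]|.

(* p (a sequence of arcs) is an oriented path starting at x: its vertex
   sequence x :: map head p has pairwise distinct vertices and consecutive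
   arcs are joined head to tail. *)
Definition oriented_path_from (dir : E -> bool) (x : V) (p : seq E) : bool :=
  (map (tail dir) p == belast x (map (head dir) p)) && uniq (x :: map (head dir) p).

Definition inner_vertex (dir : E -> bool) (x : V) (p : seq E) (v : V) : bool :=
  v \in behead (map (tail dir) p).

Definition end_vertex (dir : E -> bool) (x : V) (p : seq E) (v : V) : bool :=
  (v == x) || (v == last x (map (head dir) p)).

Definition good_subgraph (EQ : {set E}) : Prop :=
  exists (A : {set E}) (dir : E -> bool) (P : V -> seq E),
    [/\ EQminus EQ \subset A,
        A \subset ~: EQ,
        (forall x, x \in VQ EQ -> oriented_path_from dir x (P x)),
        (* the arcs of A_E are exactly the arcs of the paths, each used once *)
        (forall e, \sum_(x in VQ EQ) count_mem e (P x) = nat_of_bool (e \in A))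
      & [/\
        (forall v, v \in VQ EQ ->
           outdeg A dir v = 1 /\ indeg A dir v + degIn EQ v + 1 = deg v),
        (forall x v, x \in VQ EQ -> inner_vertex dir x (P x) v ->
           outdeg A dir v = 1 /\ indeg A dir v + 1 = deg v)
      &
        (forall x v, x \in VQ EQ -> end_vertex dir x (P x) v ->
           indeg A dir v < deg v)]].

End Graph.

From Pilot Require Import Defs.
From mathcomp Require Import all_boot.

(* Every vertex v of a good subgraph Q has degree at least 2 in H, since condition (i)
   gives d_H(v) = d^-(v) + d_Q(v) + 1 with d_Q(v) >= 1.  Likewise every endpoint y of
   an arc of a path P_x has degree at least 2: either y = x is in Q, or y is entered by
   an arc of P_x and conditions (ii)/(iii) give d_H(y) > d^-(y) >= 1.  So if v in Q had
   a leaf neighbour y, then y would lie outside Q, the edge vy would be in E_Q^- and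
   hence an arc, and the leaf y would have degree at least 2. *)

Lemma mem_behead_belast (T : eqType) (x y : T) (s : seq T) :
  y \in s -> y != last x s -> y \in behead (belast x s).
Proof.
case: s => //= a s.
by rewrite lastI mem_rcons in_cons => /orP [/eqP -> | //]; rewrite eqxx.
Qed.

Section Graph.
Local Set Implicit Arguments.
Local Unset Strict Implicit.
Variables (V E : finType) (ends : E -> V * V).

Lemma oriented_path_incident dir x p e y :
  oriented_path_from ends dir x p -> e \in p -> incident ends e y ->
  y \in x :: map (Defs.head ends dir) p.
Proof.
case/andP => /eqP tailsE _ ep ey.
have [-> | ->] : y = Defs.tail ends dir e \/ y = Defs.head ends dir e.
  by rewrite /Defs.tail /Defs.head; case: (dir e); case/orP: ey => /eqP <-; auto.
- by rewrite lastI mem_rcons -tailsE in_cons map_f ?orbT.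
- by rewrite in_cons map_f ?orbT.
Qed.

Section GoodSubgraph.
Variables (EQ A : {set E}) (dir : E -> bool) (P : V -> seq E).

Lemma incident_VQ e v :
  e \in EQ -> incident ends e v -> v \in VQ ends EQ.
Proof. by move=> eEQ ev; rewrite inE; apply/existsP; exists e; rewrite eEQ. Qed.

Lemma degIn_VQ_gt0 v : v \in VQ ends EQ -> 0 < degIn ends EQ v.
Proof.
rewrite inE => /exists_inP [e eEQ]; rewrite /incident /degIn addn_gt0.
by case/orP => /eqP ev; apply/orP; [left | right]; apply/card_gt0P; exists e;
  rewrite inE eEQ ev eqxx.
Qed.

Hypothesis count_P : forall e, \sum_(x in VQ ends EQ) count_mem e (P x) = (e \in A).
Hypothesis path_P : forall x, x \in VQ ends EQ -> oriented_path_from ends dir x (P x).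
Hypothesis cond_i : forall v, v \in VQ ends EQ ->
  outdeg ends A dir v = 1 /\ indeg ends A dir v + degIn ends EQ v + 1 = deg ends v.
Hypothesis cond_ii : forall x v, x \in VQ ends EQ -> inner_vertex ends dir x (P x) v ->
  outdeg ends A dir v = 1 /\ indeg ends A dir v + 1 = deg ends v.
Hypothesis cond_iii : forall x v, x \in VQ ends EQ -> end_vertex ends dir x (P x) v ->
  indeg ends A dir v < deg ends v.

Lemma VQ_deg_gt1 v : v \in VQ ends EQ -> 1 < deg ends v.
Proof.
move=> vQ; have [_ <-] := cond_i vQ.
by rewrite addn1 ltnS (leq_trans (degIn_VQ_gt0 vQ)) ?leq_addl.
Qed.

Lemma arc_on_some_path e : e \in A -> exists2 x, x \in VQ ends EQ & e \in P x.
Proof.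
move=> eA; apply/exists_inP; apply: contraT => /exists_inPn notinP.
move: (count_P e); rewrite eA big1 // => x xQ.
by apply/eqP; rewrite -leqn0 leqNgt -has_count has_pred1 notinP.
Qed.

Lemma path_arc_in_A x e : x \in VQ ends EQ -> e \in P x -> e \in A.
Proof.
move=> xQ ep; move: (count_P e); rewrite (bigD1 x) //=.
case: (e \in A) => // /eqP; rewrite addn_eq0 => /andP [/eqP count0 _].
by move: ep; rewrite -has_pred1 has_count count0.
Qed.

(* The head of an arc of P_x is entered by that arc, and is either inner or terminal. *)
Lemma path_head_deg_gt1 x y :
  x \in VQ ends EQ -> y \in map (Defs.head ends dir) (P x) -> 1 < deg ends y.
Proof.
move=> xQ yP; have indeg_gt0 : 0 < indeg ends A dir y.
  case/mapP: yP => e ep ->; apply/card_gt0P; exists e.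
  by rewrite inE eqxx andbT; apply: path_arc_in_A ep.
have [ylast | ynotlast] := eqVneq y (last x (map (Defs.head ends dir) (P x))).
- have yend : end_vertex ends dir x (P x) y by rewrite /end_vertex ylast eqxx orbT.
  exact: leq_ltn_trans indeg_gt0 (cond_iii xQ yend).
- have /andP [/eqP tailsE _] := path_P xQ.
  have yinner : inner_vertex ends dir x (P x) y.
    by rewrite /inner_vertex tailsE mem_behead_belast.
  by have [_ <-] := cond_ii xQ yinner; rewrite addn1 ltnS.
Qed.

Lemma arc_incident_deg_gt1 e y : e \in A -> incident ends e y -> 1 < deg ends y.
Proof.
move=> eA ey; have [x xQ ep] := arc_on_some_path eA.
have := oriented_path_incident (path_P xQ) ep ey.
rewrite in_cons => /orP [/eqP -> | yP]; first exact: VQ_deg_gt1.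
exact: path_head_deg_gt1 yP.
Qed.

End GoodSubgraph.
End Graph.

Theorem mainTheorem6 (V E : finType) (ends : E -> V * V) (EQ : {set E}) :
  good_subgraph ends EQ ->
  forall v : V, v \in VQ ends EQ -> ~~ leaf ends v /\ ~ support_vertex ends v.
Proof.
move=> [A [dir [P [EQminus_sub _ path_P count_P [cond_i cond_ii cond_iii]]]]] v vQ.
split; first by rewrite /leaf gtn_eqF ?(VQ_deg_gt1 cond_i vQ).
move=> [e [y [/eqP degy [_ ends_e]]]].
have [ev ey] : incident ends e v /\ incident ends e y.
  by rewrite /incident; case: ends_e => ->; rewrite !eqxx ?orbT.
have eNQ : e \notin EQ.
  by apply/negP => /incident_VQ/(_ ey)/(VQ_deg_gt1 cond_i); rewrite degy.
have eA : e \in A.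
  by apply: (subsetP EQminus_sub); rewrite inE eNQ; apply/exists_inP; exists v.
have := arc_incident_deg_gt1 count_P path_P cond_i cond_ii cond_iii eA ey.
by rewrite degy.
Qed.
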